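(* Let $D$ be an integral domain and $\star$ a semistar operation on $D$. The following are equivalent: (i) for every overring $T$ of $D$ and every semistar operation $\star'$ on $T$, $T$ is $(\star,\star')$-linked to $D$; (ii) every overring $T$ of $D$ is $(\star,d_T)$-linked to $D$; (iii) every overring $T$ of $D$ is $t$-linked to $(D,\star)$; (iv) for every valuation overring $V$ of $D$ there is a semistar operation $\ast_V$ on $V$ with $V^{\ast_V}=V$ such that $V$ is $(\star,\ast_V)$-linked to $D$; (v) every maximal ideal of $D$ is a quasi-$\star_f$-maximal ideal; (vi) for every proper ideal $I$ of $D$, $I^{\star_f}\subsetneq D^\star$; (vii) for every proper finitely generated ideal $I$ of $D$, $I^\star\subsetneq D^\star$; (viii) for every proper $\star_f$-invertible ideal $I$ of $D$ (i.e. $(II^{-1})^{\star_f}=D^\star$, where $I^{-1}=(D:_KI)$), $I^{\star_f}\subsetneq D^\star$.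
   Context: Let $D$ be an integral domain with quotient field $K$. $\overline{\mathbf F}(D)$ denotes the set of all nonzero $D$-submodules of $K$ and $\mathbf f(D)$ the set of nonzero finitely generated $D$-submodules of $K$. A semistar operation on $D$ is a map $\star:\overline{\mathbf F}(D)\to\overline{\mathbf F}(D)$, $E\mapsto E^\star$, such that for all $0\ne x\in K$ and $E,F\in\overline{\mathbf F}(D)$: (1) $(xE)^\star=xE^\star$; (2) $E\subseteq F\Rightarrow E^\star\subseteq F^\star$; (3) $E\subseteq E^\star$ and $(E^\star)^\star=E^\star$. $\star_f$ is defined by $E^{\star_f}=\bigcup\{F^\star:F\in\mathbf f(D),F\subseteq E\}$. A nonzero ideal $I$ of $D$ is a quasi-$\star$-ideal if $I^\star\cap D=I$; a quasi-$\star$-maximal ideal is a maximal element among proper quasi-$\star$-ideals. An overring of $D$ is a ring $T$ with $D\subseteq T\subseteq K$; semistar operations on $T$ are defined likewise. $d_T$ denotes the identity operation on $T$; $v_T$ is $E\mapsto(T:_K(T:_KE))$ and $t_T:=(v_T)_f$. If $\star'$ is a semistar operation on $T$, $T$ is $(\star,\star')$-linked to $D$ if for every nonzero finitely generated ideal $F\subseteq D$ with $F^\star=D^\star$ one has $(FT)^{\star'}=T^{\star'}$; $T$ is $t$-linked to $(D,\star)$ if it is $(\star,t_T)$-linked to $D$. *)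

(* Subsets of the field K are predicates K -> Prop; equality of
   subsets is Leibniz equality (funext/propext are available). *)
From mathcomp Require Import all_boot all_order all_algebra.
Set Implicit Arguments. Unset Strict Implicit. Unset Printing Implicit Defensive.
Import GRing.Theory.
Local Open Scope ring_scope.

Section Defs.
Variable K : fieldType.

Definition ksubset (A B : K -> Prop) := forall x, A x -> B x.
Definition kstrict_subset (A B : K -> Prop) := ksubset A B /\ A <> B.

Definition subring (R : K -> Prop) :=
  [/\ R 0, R 1, (forall x y, R x -> R y -> R (x - y))
    & (forall x y, R x -> R y -> R (x * y))].

Definition domain_with_qf (D : K -> Prop) :=
  subring D /\
  forall x : K, exists a b, [/\ D a, D b, b != 0 & x = a / b].

Definition submodule (R E : K -> Prop) :=
  [/\ E 0, (forall x y, E x -> E y -> E (x + y))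
    & (forall r x, R r -> E x -> E (r * x))].
Definition nonzero (E : K -> Prop) := exists x, E x /\ x != 0.
Definition Fbar (R E : K -> Prop) := submodule R E /\ nonzero E.

Definition fspan (R : K -> Prop) (s : seq K) : K -> Prop :=
  fun x => exists c : nat -> K,
    (forall i, R (c i)) /\ x = \sum_(i < size s) c i * s`_i.
Definition fin_gen (R E : K -> Prop) := exists s : seq K, E = fspan R s.

Definition kscale (x : K) (E : K -> Prop) : K -> Prop :=
  fun y => exists e, E e /\ y = x * e.

Definition prodm (E F : K -> Prop) : K -> Prop :=
  fun x => exists (n : nat) (a b : nat -> K),
    [/\ forall i, E (a i), forall i, F (b i) & x = \sum_(i < n) a i * b i].

Definition colon (T E : K -> Prop) : K -> Prop :=
  fun x => forall e, E e -> T (x * e).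

Record semistar (R : K -> Prop) (st : (K -> Prop) -> (K -> Prop)) : Prop := {
  ss_Fbar : forall E, Fbar R E -> Fbar R (st E);
  ss_scale : forall x E, x != 0 -> Fbar R E -> st (kscale x E) = kscale x (st E);
  ss_mono : forall E F, Fbar R E -> Fbar R F -> ksubset E F -> ksubset (st E) (st F);
  ss_ext : forall E, Fbar R E -> ksubset E (st E);
  ss_idem : forall E, Fbar R E -> st (st E) = st E }.

Definition star_f (R : K -> Prop) (st : (K -> Prop) -> (K -> Prop)) (E : K -> Prop) :
  K -> Prop :=
  fun x => exists F, [/\ Fbar R F, fin_gen R F, ksubset F E & st F x].

Definition d_op (E : K -> Prop) : K -> Prop := E.
Definition v_op (T : K -> Prop) (E : K -> Prop) : K -> Prop := colon T (colon T E).
Definition t_op (T : K -> Prop) := star_f T (v_op T).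

Definition kideal (D I : K -> Prop) := submodule D I /\ ksubset I D.
Definition kproper (D I : K -> Prop) := ~ ksubset D I.
Definition maximal_ideal (D M : K -> Prop) :=
  [/\ kideal D M, kproper D M &
      forall I, kideal D I -> kproper D I -> ksubset M I -> I = M].

Definition quasi_ideal (D : K -> Prop) (st : (K -> Prop) -> (K -> Prop)) I :=
  [/\ kideal D I, nonzero I & (fun x => st I x /\ D x) = I].
Definition quasi_maximal (D : K -> Prop) (st : (K -> Prop) -> (K -> Prop)) M :=
  [/\ quasi_ideal D st M, kproper D M &
      forall I, quasi_ideal D st I -> kproper D I -> ksubset M I -> I = M].

Definition overring (D T : K -> Prop) := subring T /\ ksubset D T.
Definition valuation_overring (D V : K -> Prop) :=
  overring D V /\ forall x : K, x != 0 -> V x \/ V (x^-1).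

Definition linked (D : K -> Prop) (st : (K -> Prop) -> (K -> Prop))
  (T : K -> Prop) (st' : (K -> Prop) -> (K -> Prop)) :=
  forall F, kideal D F -> nonzero F -> fin_gen D F -> st F = st D ->
    st' (prodm F T) = st' T.

End Defs.

From mathcomp Require Import all_boot all_order all_algebra.
From mathcomp Require boolp classical_sets.
From mathcomp Require Import ring zify.
From Stdlib Require Import Classical FunctionalExtensionality PropExtensionality.
Set Implicit Arguments. Unset Strict Implicit. Unset Printing Implicit Defensive.
Import GRing.Theory.
Local Open Scope ring_scope.

(* Condition (vii) is the pivot.  Under (vii) a finitely generated ideal F with F^* = D^*
   is D itself, so FT = T for every overring T and every linkedness condition holds; the
   conditions (vi) and (viii) are (vii) read through *_f, which agrees with * on finitely
   generated ideals; and no maximal ideal M has 1 in M^{*_f}, which gives (v), while (v)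
   gives (vi) by Krull's lemma.  Conversely, over a valuation overring V the extension FV
   of a finitely generated ideal is principal and hence t_V-closed, which gives
   (iii) => (iv); and by Chevalley's extension theorem a proper ideal F of D has FV <> V
   for some valuation overring V, which (iv) forbids as soon as F^* = D^*. *)

Lemma pred_ext (T : Type) (A B : T -> Prop) :
  (forall x, A x -> B x) -> (forall x, B x -> A x) -> A = B.
Proof.
move=> AB BA; apply: functional_extensionality => x.
by apply: propositional_extensionality; split; [apply: AB | apply: BA].
Qed.

Lemma zorn_chain_union (T : Type) (P : (T -> Prop) -> Prop) (X0 : T -> Prop) :
  P X0 ->
  (forall C : (T -> Prop) -> Prop, (forall X, C X -> P X) ->
     (forall X Y, C X -> C Y -> (forall t, X t -> Y t) \/ (forall t, Y t -> X t)) ->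
     (exists X, C X) -> P (fun t => exists X, C X /\ X t)) ->
  exists M, P M /\ forall B, P B -> (forall t, M t -> B t) -> B = M.
Proof.
move=> PX0 Pchain.
pose le (A B : {X | P X}) := boolp.asbool (forall t, sval A t -> sval B t).
have [[M PM] Mmax] : exists M, forall B, le M B -> B = M.
  apply: classical_sets.Zorn.
  - by move=> A; apply/boolp.asboolP.
  - by move=> A B C /boolp.asboolP AB /boolp.asboolP BC; apply/boolp.asboolP => t /AB /BC.
  - move=> [A PA] [B PB] /boolp.asboolP AB /boolp.asboolP BA.
    have eAB : A = B by apply: pred_ext.
    by subst B; congr exist; apply: boolp.Prop_irrelevance.
  move=> C Ctot; pose CX (X : T -> Prop) := exists A, C A /\ sval A = X.
  case: (classic (exists A, C A)) => [[A0 CA0]|Cempty]; last first.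
    by exists (exist _ X0 PX0) => A CA; case: Cempty; exists A.
  have PU : P (fun t => exists X, CX X /\ X t).
    apply: Pchain; first by move=> X [[A PA] [_ <-]].
    - move=> X Y [A [CA <-]] [B [CB <-]].
      by case: (Ctot A B CA CB) => /boolp.asboolP; [left | right].
    - by exists (sval A0), A0.
  exists (exist _ _ PU) => A CA; apply/boolp.asboolP => t At /=.
  by exists (sval A); split => //; exists A.
exists M; split => // B PB MB.
by case: (Mmax (exist _ B PB) (introT (boolp.asboolP _) MB)).
Qed.

Section Modules.
Variable K : fieldType.
Implicit Types (R T E F G : K -> Prop) (s : seq K).

Lemma subring0 R : subring R -> R 0. Proof. by case. Qed.
Lemma subring1 R : subring R -> R 1. Proof. by case. Qed.

Lemma subringB R x y : subring R -> R x -> R y -> R (x - y).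
Proof. by case=> _ _ + _; apply. Qed.

Lemma subringM R x y : subring R -> R x -> R y -> R (x * y).
Proof. by case=> _ _ _; apply. Qed.

Lemma subringN R x : subring R -> R x -> R (- x).
Proof. by move=> hR Rx; rewrite -sub0r; apply: subringB (subring0 hR) Rx. Qed.

Lemma subringD R x y : subring R -> R x -> R y -> R (x + y).
Proof. by move=> hR Rx Ry; rewrite -[y]opprK; apply: subringB (subringN hR Ry). Qed.

Lemma subring_nat R (b : bool) : subring R -> R b%:R.
Proof. by case: b; [apply: subring1 | apply: subring0]. Qed.

Lemma subring_submod R : subring R -> submodule R R.
Proof.
by move=> hR; split=> [|x y|r x]; [apply: subring0 | apply: subringD | apply: subringM].
Qed.

Lemma subring_Fbar R : subring R -> Fbar R R.
Proof.
by move=> hR; split; [apply: subring_submod | exists 1; split; [apply: subring1|apply: oner_neq0]].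
Qed.

Lemma submod0 R E : submodule R E -> E 0. Proof. by case. Qed.

Lemma submodD R E x y : submodule R E -> E x -> E y -> E (x + y).
Proof. by case=> _ + _; apply. Qed.

Lemma submodM R E r x : submodule R E -> R r -> E x -> E (r * x).
Proof. by case=> _ _; apply. Qed.

Lemma submod_sum R E n (f : 'I_n -> K) :
  submodule R E -> (forall i, E (f i)) -> E (\sum_(i < n) f i).
Proof.
by move=> hE Ef; apply: big_ind => [|x y|i _]; [apply: submod0 hE | apply: submodD hE | apply: Ef].
Qed.

Lemma subring_sum R n (f : 'I_n -> K) :
  subring R -> (forall i, R (f i)) -> R (\sum_(i < n) f i).
Proof. by move/subring_submod; apply: submod_sum. Qed.

Lemma submod_restrict R T E : submodule T E -> ksubset R T -> submodule R E.
Proof. by case=> E0 ED EM RT; split=> // r x /RT; apply: EM. Qed.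

Lemma kscale_submod R x : subring R -> submodule R (kscale x R).
Proof.
move=> hR; split.
- by exists 0; split; [apply: subring0 | rewrite mulr0].
- move=> _ _ [a [Ra ->]] [b [Rb ->]]; exists (a + b).
  by rewrite mulrDr; split; first exact: subringD.
- by move=> r _ Rr [a [Ra ->]]; exists (r * a); rewrite mulrCA; split; first exact: subringM.
Qed.

Lemma fspan_sub R E s :
  submodule R E -> (forall y, y \in s -> E y) -> ksubset (fspan R s) E.
Proof.
move=> hE Es _ [c [Rc ->]]; apply: (submod_sum hE) => i.
exact: submodM hE (Rc i) (Es _ (mem_nth 0 (ltn_ord i))).
Qed.

Lemma fspan_submod R s : subring R -> submodule R (fspan R s).
Proof.
move=> hR; split.
- exists (fun _ => 0); split; first by move=> _; apply: subring0.
  by rewrite big1 // => i _; rewrite mul0r.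
- move=> _ _ [c [Rc ->]] [d [Rd ->]]; exists (fun i => c i + d i); split.
    by move=> i; apply: subringD.
  by rewrite -big_split /=; apply: eq_bigr => i _; rewrite mulrDl.
- move=> r _ Rr [c [Rc ->]]; exists (fun i => r * c i); split.
    by move=> i; apply: subringM.
  by rewrite mulr_sumr; apply: eq_bigr => i _; rewrite mulrA.
Qed.

Lemma fspan_mem R s y : subring R -> y \in s -> fspan R s y.
Proof.
move=> hR ys; have ys_lt : (index y s < size s)%N by rewrite index_mem.
exists (fun k : nat => (k == index y s)%:R); split => [k|]; first exact: subring_nat.
rewrite (bigD1 (Ordinal ys_lt)) //= eqxx mul1r nth_index // big1 ?addr0 // => j.
by rewrite -val_eqE /= => /negbTE ->; rewrite mul0r.
Qed.

Lemma fspan_Fbar R s y : subring R -> y \in s -> y != 0 -> Fbar R (fspan R s).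
Proof.
by move=> hR ys y0; split; [apply: fspan_submod | exists y; split => //; apply: fspan_mem].
Qed.

Lemma fspan_self R : subring R -> fspan R [:: 1] = R.
Proof.
move=> hR; apply: pred_ext; last first.
  by move=> r Rr; exists (fun _ => r); split => //; rewrite big_ord1 /= mulr1.
apply: fspan_sub (subring_submod hR) _ => y.
by rewrite inE => /eqP ->; apply: subring1.
Qed.

Lemma fspan_nonzero R s : nonzero (fspan R s) -> exists y, y \in s /\ y != 0.
Proof.
move=> [_ [[c [_ ->]] sum_neq0]]; apply: NNPP => s0; move: sum_neq0.
rewrite big1 ?eqxx // => i _; have := mem_nth 0 (ltn_ord i).
case: (eqVneq s`_i 0) => [-> _|si0 si]; first by rewrite mulr0.
by case: s0; exists s`_i.
Qed.

Lemma prodm0 E F : E 0 -> F 0 -> prodm E F 0.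
Proof. by move=> E0 F0; exists 0%N, (fun _ => 0), (fun _ => 0); rewrite big_ord0. Qed.

Lemma prodmD E F x y : prodm E F x -> prodm E F y -> prodm E F (x + y).
Proof.
move=> [n [a [b [Ea Fb ->]]]] [m [a' [b' [Ea' Fb' ->]]]].
exists (n + m)%N, (fun i => if (i < n)%N then a i else a' (i - n)%N),
  (fun i => if (i < n)%N then b i else b' (i - n)%N); split => [i|i|].
- by case: ifP.
- by case: ifP.
rewrite big_split_ord /=; congr (_ + _); apply: eq_bigr => i _ /=.
  by rewrite ltn_ord.
by rewrite ltnNge leq_addr /= addKn.
Qed.

Lemma prodm_mul E F a b : E a -> F b -> prodm E F (a * b).
Proof. by move=> Ea Fb; exists 1%N, (fun _ => a), (fun _ => b); rewrite big_ord1. Qed.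

Lemma prodm_mulr E T y t : subring T -> prodm E T y -> T t -> prodm E T (y * t).
Proof.
move=> hT [n [a [b [Ea Tb ->]]]] Tt; exists n, a, (fun i => b i * t); split => //.
  by move=> i; apply: subringM.
by rewrite mulr_suml; apply: eq_bigr => i _; rewrite mulrA.
Qed.

Lemma prodm_submod E T : E 0 -> subring T -> submodule T (prodm E T).
Proof.
move=> E0 hT; split; first exact: prodm0 E0 (subring0 hT).
- by move=> x y; apply: prodmD.
- by move=> r x Tr Ex; rewrite mulrC; apply: prodm_mulr.
Qed.

Lemma prodm_sub E T G : submodule T G -> ksubset E G -> ksubset (prodm E T) G.
Proof.
move=> hG EG _ [n [a [b [Ea Tb ->]]]]; apply: (submod_sum hG) => i.
by rewrite mulrC; apply: submodM hG (Tb i) (EG _ (Ea i)).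
Qed.

Lemma prodm_full E T : subring T -> ksubset E T -> prodm E T 1 -> prodm E T = T.
Proof.
move=> hT ET ET1; apply: pred_ext; first exact: prodm_sub (subring_submod hT) ET.
by move=> t Tt; rewrite -[t]mul1r; apply: prodm_mulr.
Qed.

End Modules.

Section StarFinite.
Variables (K : fieldType) (D : K -> Prop) (st : (K -> Prop) -> K -> Prop).
Hypotheses (hD : subring D) (hst : semistar D st).
Implicit Types (E F I : K -> Prop).

Lemma kideal_Fbar I : kideal D I -> nonzero I -> Fbar D I.
Proof. by case. Qed.

Lemma kproper_not1 I : kideal D I -> kproper D I <-> ~ I 1.
Proof.
move=> hI; split => [Ip I1|I1 DI]; last exact: I1 (DI 1 (subring1 hD)).
by apply: Ip => d Dd; rewrite -[d]mulr1; apply: submodM hI.1 Dd I1.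
Qed.

Lemma semistar_full1 : st D 1.
Proof. exact: (ss_ext hst) (subring_Fbar hD) _ (subring1 hD). Qed.

Lemma semistar_le_full F : Fbar D F -> ksubset F D -> ksubset (st F) (st D).
Proof. by move=> hF FD; apply: (ss_mono hst) hF (subring_Fbar hD) FD. Qed.

Lemma semistar_full_of1 F : Fbar D F -> ksubset F D -> st F 1 -> st F = st D.
Proof.
move=> hF FD stF1; apply: pred_ext; first exact: semistar_le_full.
have stF_sub := (ss_Fbar hst hF).1.
have D_stF : ksubset D (st F) by move=> d Dd; rewrite -[d]mulr1; apply: submodM stF_sub Dd stF1.
move=> x; rewrite -(ss_idem hst hF).
exact: (ss_mono hst) (subring_Fbar hD) (ss_Fbar hst hF) D_stF x.
Qed.

Lemma star_f_fin_gen I : Fbar D I -> fin_gen D I -> star_f D st I = st I.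
Proof.
move=> hI Ifg; apply: pred_ext => x; last by exists I; split.
by case=> F [hF _ FI]; apply: (ss_mono hst) hF hI FI x.
Qed.

Lemma star_f_mono E E' : ksubset E E' -> ksubset (star_f D st E) (star_f D st E').
Proof. by move=> EE' x [F [hF Ffg FE stFx]]; exists F; split => // y /FE /EE'. Qed.

Lemma star_f_le_full E : ksubset E D -> ksubset (star_f D st E) (st D).
Proof.
by move=> ED x [F [hF _ FE]]; apply: semistar_le_full hF _ x => y /FE /ED.
Qed.

Lemma star_f_ext E : submodule D E -> nonzero E -> ksubset E (star_f D st E).
Proof.
move=> hE [m [Em m0]] x Ex.
have mx_Fbar : Fbar D (fspan D [:: m; x]) by apply: fspan_Fbar m0; rewrite ?inE ?eqxx.
exists (fspan D [:: m; x]); split => //; first by exists [:: m; x].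
  by apply: fspan_sub => // y; rewrite !inE => /orP[] /eqP ->.
by apply: (ss_ext hst) mx_Fbar _ _; apply: fspan_mem; rewrite ?inE ?eqxx ?orbT.
Qed.

Lemma star_f_submod E : submodule D E -> nonzero E -> submodule D (star_f D st E).
Proof.
move=> hE En; split; first exact: star_f_ext (submod0 hE).
- move=> x y [F1 [hF1 [s1 eF1] F1E stF1x]] [F2 [hF2 [s2 eF2] F2E stF2y]].
  subst F1 F2.
  have F_G s : {subset s <= s1 ++ s2} -> ksubset (fspan D s) (fspan D (s1 ++ s2)).
    by move=> ss; apply: fspan_sub (fspan_submod _ hD) _ => z /ss; apply: fspan_mem.
  have F1G : ksubset (fspan D s1) (fspan D (s1 ++ s2)).
    by apply: F_G => z zs; rewrite mem_cat zs.
  have F2G : ksubset (fspan D s2) (fspan D (s1 ++ s2)).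
    by apply: F_G => z zs; rewrite mem_cat zs orbT.
  have [m [F1m m0]] := hF1.2.
  have hG : Fbar D (fspan D (s1 ++ s2)).
    by split; [exact: fspan_submod | exists m; split => //; apply: F1G].
  exists (fspan D (s1 ++ s2)); split => //; first by exists (s1 ++ s2).
    apply: fspan_sub hE _ => z; rewrite mem_cat => /orP[] zs.
      by apply: F1E; apply: fspan_mem.
    by apply: F2E; apply: fspan_mem.
  apply: (submodD (ss_Fbar hst hG).1).
    exact: (ss_mono hst) hF1 hG F1G _ stF1x.
  exact: (ss_mono hst) hF2 hG F2G _ stF2y.
- move=> r x Dr [F [hF Ffg FE stFx]]; exists F; split => //.
  exact: submodM (ss_Fbar hst hF).1 Dr stFx.
Qed.

End StarFinite.

Definition fg_star_strict (K : fieldType) (D : K -> Prop) (st : (K -> Prop) -> K -> Prop) :=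
  forall I, kideal D I -> nonzero I -> kproper D I -> fin_gen D I ->
    kstrict_subset (st I) (st D).

Lemma d_semistar (K : fieldType) (T : K -> Prop) : semistar T (@d_op K).
Proof. by constructor; rewrite /d_op /ksubset. Qed.

Lemma linked_of_linked_d (K : fieldType) (D T : K -> Prop) st st' :
  linked D st T (@d_op K) -> linked D st T st'.
Proof. by move=> lT F hF Fn Ffg eF; rewrite [prodm F T](lT F). Qed.

Section FgStarStrict.
Variables (K : fieldType) (D : K -> Prop) (st : (K -> Prop) -> K -> Prop).
Hypotheses (hD : subring D) (hst : semistar D st).
Implicit Types (E F I M T : K -> Prop).

Lemma fg_star_strict_eq F : fg_star_strict D st ->
  kideal D F -> nonzero F -> fin_gen D F -> st F = st D -> F = D.
Proof.
move=> strict hF Fn Ffg eF; apply: pred_ext; first exact: hF.2.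
by apply: NNPP => Fp; case: (strict F hF Fn Fp Ffg).
Qed.

Lemma star_f_not1 E : fg_star_strict D st -> kideal D E -> kproper D E -> ~ star_f D st E 1.
Proof.
move=> strict hE Ep [F [hF Ffg FE stF1]].
have FD : ksubset F D by move=> x /FE; apply: hE.2.
have Fp : kproper D F by move=> DF; apply: Ep => x /DF /FE.
by case: (strict F (conj hF.1 FD) hF.2 Fp Ffg) => _; apply; apply: semistar_full_of1.
Qed.

Lemma linked_of_fg_star_strict T st' :
  fg_star_strict D st -> overring D T -> linked D st T st'.
Proof.
move=> strict [hT DT] F hF Fn Ffg eF.
rewrite (fg_star_strict_eq strict hF Fn Ffg eF) prodm_full //.
by rewrite -[1]mulr1; apply: prodm_mul; apply: subring1.
Qed.

Lemma star_f_strict_of_fg_star_strict I : fg_star_strict D st ->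
  kideal D I -> nonzero I -> kproper D I -> kstrict_subset (star_f D st I) (st D).
Proof.
move=> strict hI In Ip; split; first exact: star_f_le_full hI.2.
by move=> e; apply: (star_f_not1 strict hI Ip); rewrite e; apply: semistar_full1.
Qed.

Lemma fg_star_strict_of_star_f_strict :
  (forall I, kideal D I -> nonzero I -> kproper D I ->
     kstrict_subset (star_f D st I) (st D)) -> fg_star_strict D st.
Proof.
move=> strict I hI In Ip Ifg.
by rewrite -(star_f_fin_gen hst (kideal_Fbar hI In) Ifg); apply: strict.
Qed.

(* [1 \in I^-1], so [I I^-1] lies between [I] and [D]: [I^* = D^*] makes [I] [*_f]-invertible. *)
Lemma fg_star_strict_of_invertible_strict :
  (forall I, kideal D I -> nonzero I -> kproper D I ->
     star_f D st (prodm I (colon D I)) = st D ->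
     kstrict_subset (star_f D st I) (st D)) -> fg_star_strict D st.
Proof.
move=> strict I hI In Ip Ifg; have hIF := kideal_Fbar hI In.
split; first exact: semistar_le_full hI.2.
move=> eI; have estf := star_f_fin_gen hst hIF Ifg.
have Iinv_D : ksubset (prodm I (colon D I)) D.
  move=> _ [n [a [b [Ia bI ->]]]]; apply: subring_sum hD _ => i.
  by rewrite mulrC; apply: bI.
have I_Iinv : ksubset I (prodm I (colon D I)).
  move=> y Iy; rewrite -[y]mulr1; apply: prodm_mul => // z Iz.
  by rewrite mul1r; apply: hI.2.
have inv : star_f D st (prodm I (colon D I)) = st D.
  apply: pred_ext; first exact: star_f_le_full.
  by rewrite -eI -estf; apply: star_f_mono.
by case: (strict I hI In Ip inv) => _; rewrite estf.
Qed.

Lemma quasi_maximal_of_fg_star_strict M : fg_star_strict D st ->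
  maximal_ideal D M -> nonzero M -> quasi_maximal D (star_f D st) M.
Proof.
move=> strict [hM Mp Mmax] Mn; have hstM := star_f_submod hD hst hM.1 Mn.
have qM : (fun x => star_f D st M x /\ D x) = M.
  apply: Mmax.
  - split; last by move=> x [].
    split=> [|x y [stx Dx] [sty Dy]|r x Dr [stx Dx]].
    + by split; [apply: submod0 hstM | apply: subring0].
    + by split; [apply: submodD hstM stx sty | apply: subringD].
    + by split; [apply: submodM hstM Dr stx | apply: subringM].
  - by move=> DM; apply: (star_f_not1 strict hM Mp); case: (DM 1 (subring1 hD)).
  - by move=> x Mx; split; [apply: star_f_ext hM.1 Mn _ Mx | apply: hM.2].
split; [by split | by [] | by move=> I [hI _ _] Ip MI; apply: Mmax].
Qed.

End FgStarStrict.

Section Chains.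
Variables (T : Type) (C : (T -> Prop) -> Prop) (X1 : T -> Prop).
Hypotheses (CX1 : C X1)
  (Ctot : forall X Y, C X -> C Y -> (forall t, X t -> Y t) \/ (forall t, Y t -> X t)).

Lemma chain_common_member n (b : nat -> T) :
  (forall i, exists X, C X /\ X (b i)) ->
  exists X, C X /\ forall i, (i < n)%N -> X (b i).
Proof.
move=> Cb; elim: n => [|n [X [CX Xb]]]; first by exists X1.
have [Y [CY Ybn]] := Cb n.
have lt_Sn i : (i < n.+1)%N -> i = n \/ (i < n)%N.
  by rewrite ltnS leq_eqVlt => /orP[/eqP|]; [left | right].
case: (Ctot CX CY) => sub; [exists Y | exists X]; split => // i /lt_Sn[->|] //.
- by move/Xb; apply: sub.
- exact: sub.
- exact: Xb.
Qed.

Lemma chain_common_member2 x y :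
  (exists X, C X /\ X x) -> (exists X, C X /\ X y) -> exists X, [/\ C X, X x & X y].
Proof.
move=> Cx Cy; pose b i := if i == 0%N then x else y.
have [|X [CX Xb]] := chain_common_member 2 (b := b); first by case.
by exists X; split => //; [apply: (Xb 0%N) | apply: (Xb 1%N)].
Qed.

End Chains.

Section Maximal.
Variables (K : fieldType) (D : K -> Prop).
Hypothesis hD : subring D.

Lemma maximal_ideal_over I : kideal D I -> kproper D I ->
  exists M, maximal_ideal D M /\ ksubset I M.
Proof.
move=> hI Ip.
pose P X := [/\ kideal D X, ksubset I X & ~ X 1].
have [M [[hM IM M1] Mmax]] : exists M, P M /\ forall B, P B -> ksubset M B -> B = M.
  apply: (zorn_chain_union (X0 := I)); first by split=> //; apply/(kproper_not1 hD hI).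
  move=> C PC Ctot [X1 CX1]; have common2 := chain_common_member2 CX1 Ctot.
  split; [split; [split|] | |].
  - by exists X1; split => //; case: (PC X1 CX1) => -[/submod0].
  - move=> x y Cx Cy; have [X [CX Xx Xy]] := common2 _ _ Cx Cy.
    by exists X; split => //; case: (PC X CX) => -[hX _] _ _; apply: submodD hX Xx Xy.
  - move=> r x Dr [X [CX Xx]]; exists X; split => //.
    by case: (PC X CX) => -[hX _] _ _; apply: submodM hX Dr Xx.
  - by move=> x [X [CX Xx]]; case: (PC X CX) => -[_ XD] _ _; apply: XD.
  - by move=> x Ix; exists X1; split => //; case: (PC X1 CX1) => _ + _; apply.
  - by move=> [X [CX X_1]]; case: (PC X CX) => _ _; apply.
exists M; split => //; split => //; first by apply/(kproper_not1 hD hM).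
move=> J hJ Jp MJ; apply: Mmax => //; split => //; first by move=> x /IM /MJ.
by apply/(kproper_not1 hD hJ).
Qed.

Variable st : (K -> Prop) -> K -> Prop.
Hypothesis hst : semistar D st.

Lemma star_f_strict_of_quasi_maximal :
  (forall M, maximal_ideal D M -> nonzero M -> quasi_maximal D (star_f D st) M) ->
  forall I, kideal D I -> nonzero I -> kproper D I -> kstrict_subset (star_f D st I) (st D).
Proof.
move=> qmax I hI In Ip; split; first exact: star_f_le_full hI.2.
move=> eI; have [M [Mmax IM]] := maximal_ideal_over hI Ip; have [hM Mp _] := Mmax.
have Mn : nonzero M by case: In => x [Ix x0]; exists x; split => //; apply: IM.
have [[_ _ qM] _ _] := qmax M Mmax Mn.
apply: (kproper_not1 hD hM).1 Mp _; rewrite -qM; split; last exact: subring1.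
by apply: star_f_mono IM _ _; rewrite eI; apply: semistar_full1.
Qed.

End Maximal.

Section Valuation.
Variables (K : fieldType) (V : K -> Prop).
Hypotheses (hV : subring V) (Vval : forall x : K, x != 0 -> V x \/ V x^-1).

Lemma valuation_seq_divisor (s : seq K) :
  exists x, (x = 0 \/ x \in s) /\ forall y, y \in s -> kscale x V y.
Proof.
have div_self z : kscale z V z by exists 1; rewrite mulr1; split; first exact: subring1.
have div0 z : kscale z V 0 by exists 0; rewrite mulr0; split; first exact: subring0.
elim: s => [|a s [x [xs xdiv]]]; first by exists 0; split; [left|].
case: (eqVneq a 0) => [->|a0].
  exists x; split; first by case: xs => xs; [left | right; rewrite inE xs orbT].
  by move=> y; rewrite inE => /orP[/eqP -> | /xdiv].
case: (eqVneq x 0) => [x0|x0].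
  exists a; split=> [|y]; first by right; rewrite inE eqxx.
  rewrite inE => /orP[/eqP -> // | /xdiv[e [_ ->]]].
  by rewrite x0 mul0r.
have ax0 : a / x != 0 by rewrite mulf_neq0 ?invr_eq0.
case: (Vval ax0) => [Vax | ]; last rewrite invf_div => Vxa.
  exists x; split; first by case: xs => xs; [left | right; rewrite inE xs orbT].
  move=> y; rewrite inE => /orP[/eqP -> | /xdiv //].
  by exists (a / x); rewrite [x * _]mulrC divfK.
exists a; split=> [|y]; first by right; rewrite inE eqxx.
rewrite inE => /orP[/eqP -> // | /xdiv[e [Ve ->]]].
by exists (x / a * e); rewrite mulrA [a * _]mulrC divfK //; split; first exact: subringM.
Qed.

Lemma valuation_prodm_principal (D : K -> Prop) (s : seq K) : subring D -> ksubset D V ->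
  nonzero (fspan D s) ->
  exists x, [/\ x != 0, fspan D s x & ksubset (prodm (fspan D s) V) (kscale x V)].
Proof.
move=> hD DV /fspan_nonzero[y [ys y0]].
have [x [xs xdiv]] := valuation_seq_divisor s.
have x0 : x != 0.
  by apply: contraNneq y0 => x0; have [e [_ ->]] := xdiv y ys; rewrite x0 mul0r.
have {}xs : x \in s by case: xs => // /eqP; rewrite (negbTE x0).
exists x; split => //; first exact: fspan_mem.
apply: prodm_sub (kscale_submod x hV) _.
exact: fspan_sub (submod_restrict (kscale_submod x hV) DV) xdiv.
Qed.

End Valuation.

Lemma valuation_linked_d_of_t (K : fieldType) (D V : K -> Prop) st :
  subring D -> valuation_overring D V ->
  linked D st V (t_op V) -> linked D st V (@d_op K).
Proof.
move=> hD [[hV DV] Vval] lV F hF Fn [s eF] eFst; subst F.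
have [x [x0 Fx FV_xV]] := valuation_prodm_principal hV Vval hD DV Fn.
have t1 : t_op V (prodm (fspan D s) V) 1.
  rewrite (lV _ hF Fn (ex_intro _ s erefl) eFst).
  exists V; split => //; [exact: subring_Fbar | by exists [:: 1]; rewrite fspan_self |].
  by move=> c Vc; rewrite mul1r; have := Vc 1 (subring1 hV); rewrite mulr1.
have [G [_ _ GF vG1]] := t1.
have Vxinv : V x^-1.
  by rewrite -[x^-1]mul1r; apply: vG1 => g /GF /FV_xV[w [Vw ->]]; rewrite mulKf.
rewrite /d_op prodm_full //; first by move=> y /hF.2 /DV.
by rewrite -(mulfV x0); apply: prodm_mul.
Qed.

Section Chevalley.
Variable K : fieldType.
Implicit Types (R D F J : K -> Prop) (p q : {poly K}).

Definition poly_in R p := forall i, R p`_i.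

Definition adjoin R (x : K) : K -> Prop := fun y => exists p, poly_in R p /\ y = p.[x].

Lemma poly_inM R p q : subring R -> poly_in R p -> poly_in R q -> poly_in R (p * q).
Proof. by move=> hR Rp Rq i; rewrite coefM; apply: subring_sum => // j; apply: subringM. Qed.

Lemma poly_inC R c : subring R -> R c -> poly_in R c%:P.
Proof. by move=> hR Rc i; rewrite coefC; case: ifP => // _; apply: subring0. Qed.

Lemma adjoin_subring R x : subring R -> subring (adjoin R x).
Proof.
move=> hR; split.
- by exists 0; rewrite horner0; split=> // i; rewrite coef0; apply: subring0.
- by exists 1; rewrite hornerC; split => //; apply: poly_inC (subring1 hR).
- move=> _ _ [p [Rp ->]] [q [Rq ->]]; exists (p - q); rewrite hornerD hornerN.
  by split => // i; rewrite coefB; apply: subringB.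
- move=> _ _ [p [Rp ->]] [q [Rq ->]]; exists (p * q); rewrite hornerM.
  by split => //; apply: poly_inM.
Qed.

Lemma adjoin_sub R x : subring R -> ksubset R (adjoin R x).
Proof. by move=> hR r Rr; exists r%:P; rewrite hornerC; split => //; apply: poly_inC. Qed.

Lemma adjoin_mem R x : subring R -> adjoin R x x.
Proof.
by move=> hR; exists 'X; rewrite hornerX; split => // i; rewrite coefX; apply: subring_nat.
Qed.

Lemma prodm_adjoin_poly F R x y : subring R -> F 0 -> prodm F (adjoin R x) y ->
  exists p, poly_in (prodm F R) p /\ p.[x] = y.
Proof.
move=> hR F0 [n [a [b [Fa Rb ->]]]]; elim: n => [|n [p [FRp ep]]].
  exists 0; rewrite big_ord0 horner0; split => // i.
  by rewrite coef0; apply: prodm0 F0 (subring0 hR).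
have [q [Rq eq]] := Rb n; exists (p + a n *: q); split.
  by move=> i; rewrite coefD coefZ; apply: prodmD => //; apply: prodm_mul.
by rewrite big_ord_recr /= hornerD hornerZ ep eq.
Qed.

Lemma horner_rev x q m : x != 0 -> size q = m.+1 ->
  (\sum_(j < m.+1) q`_j *: 'X^(m - j)).[x] = x ^+ m * q.[x^-1].
Proof.
move=> x0 sq; rewrite (horner_coef q) sq mulr_sumr horner_sum.
apply: eq_bigr => j _; rewrite hornerZ hornerXn exprVn.
have jm : (j <= m)%N by rewrite -ltnS.
rewrite -[in x ^+ m](subnK jm) exprD; field.
by rewrite expf_neq0.
Qed.

(* [S = 'X^m - 'X^m q(1/'X)] with [m = size q - 1]. *)
Lemma inverse_root_relation R x q : subring R -> x != 0 -> poly_in R q -> q.[x^-1] = 1 ->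
  exists S, [/\ poly_in R S, S.[x] = 0, S`_(size q).-1 = 1 - q`_0
             & forall k, ((size q).-1 < k)%N -> S`_k = 0].
Proof.
move=> hR x0 Rq q1.
have [m sq] : exists m, size q = m.+1.
  exists (size q).-1; rewrite prednK // lt0n size_poly_eq0.
  by apply: contra_eq_neq q1 => ->; rewrite horner0 eq_sym oner_eq0.
rewrite sq /=; pose S := 'X^m - \sum_(j < m.+1) q`_j *: 'X^(m - j).
have coefS k : S`_k = (k == m)%:R - \sum_(j < m.+1) q`_j * (k == (m - j)%N)%:R.
  rewrite /S coefB coefXn coef_sum; congr (_ - _).
  by apply: eq_bigr => j _; rewrite coefZ coefXn.
exists S; split.
- move=> k; rewrite coefS; apply: subringB => //; first exact: subring_nat.
  by apply: subring_sum => // j; apply: subringM (Rq _) (subring_nat _ hR).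
- by rewrite /S hornerD hornerN hornerXn (horner_rev x0 sq) q1 mulr1 subrr.
- rewrite coefS eqxx big_ord_recl /= subn0 eqxx mulr1 big1 ?addr0 // => i _.
  by rewrite (_ : (m == m - i.+1)%N = false) ?mulr0 //; apply/negbTE; have := ltn_ord i; lia.
- move=> k mk; rewrite coefS (_ : (k == m) = false); last by apply/negbTE; lia.
  rewrite big1 ?subrr // => j _.
  by rewrite (_ : (k == m - j)%N = false) ?mulr0 //; apply/negbTE; lia.
Qed.

Section DegreeDrop.
Variables (R J : K -> Prop).
Hypotheses (hR : subring R) (hJ : kideal R J).

Lemma kidealN a : J a -> J (- a).
Proof. by move=> Ja; rewrite -mulN1r; apply: submodM hJ.1 (subringN hR (subring1 hR)) Ja. Qed.

Lemma poly_one_degree_drop x p q : x != 0 -> poly_in J p -> poly_in J q ->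
  p.[x] = 1 -> q.[x^-1] = 1 -> (1 < size q <= size p)%N ->
  exists p', [/\ poly_in J p', p'.[x] = 1 & (size p' < size p)%N].
Proof.
move=> x0 Jp Jq p1 q1 /andP[sq1 sqp].
have [S [RS S0 Sm Sbig]] := inverse_root_relation hR x0 (fun i => hJ.2 _ (Jq i)) q1.
have [m sq] : exists m, size q = m.+1 by exists (size q).-1; lia.
have [n sp] : exists n, size p = n.+1 by exists (size p).-1; lia.
rewrite sq /= in Sm Sbig; have mn : (m <= n)%N by lia.
pose p' := (1 - q`_0) *: p - p`_n *: ('X^(n - m) * S) + (q`_0)%:P.
have R1q0 : R (1 - q`_0) by apply: subringB (subring1 hR) (hJ.2 _ (Jq 0%N)).
exists p'; split.
- move=> i; rewrite coefD coefB !coefZ coefXnM coefC.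
  apply: (submodD hJ.1); last by case: ifP => _; [apply: Jq | apply: submod0 hJ.1].
  apply: (submodD hJ.1); first exact: submodM hJ.1 R1q0 (Jp i).
  apply: kidealN; rewrite mulrC; apply: submodM hJ.1 _ (Jp n).
  by case: ifP => _; [apply: subring0 | apply: RS].
- by rewrite /p' !hornerD hornerN !hornerZ hornerM S0 hornerC p1 !mulr0 subr0 mulr1 subrK.
- rewrite sp ltnS; apply/leq_sizeP => j nj.
  rewrite coefD coefB !coefZ coefXnM coefC (_ : (j == 0)%N = false); last by apply/negbTE; lia.
  rewrite (_ : (j < n - m)%N = false); last by apply/negbTE; lia.
  case: (eqVneq j n) => [->|jn]; first by rewrite subKn // Sm mulrC subrr addr0.
  have {jn nj} nj : (n < j)%N by rewrite ltn_neqAle eq_sym jn nj.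
  have pj : p`_j = 0 by apply: nth_default; rewrite sp.
  by rewrite pj Sbig ?mulr0 ?subrr ?addr0 //; lia.
Qed.

(* Kaplansky's argument: lower the larger of the two degrees until one polynomial is constant. *)
Lemma no_poly_one_inverse x p q : ~ J 1 -> x != 0 -> poly_in J p -> poly_in J q ->
  p.[x] = 1 -> q.[x^-1] = 1 -> False.
Proof.
move=> J1 x0; have x0' : x^-1 != 0 by rewrite invr_eq0.
have const_not1 (r : {poly K}) (y : K) : (size r <= 1)%N -> poly_in J r -> r.[y] = 1 -> False.
  by move=> sr Jr r1; apply: J1; rewrite -r1 (size1_polyC sr) hornerC.
move: {2}(size p + size q)%N (leqnn (size p + size q)) => N.
elim: N p q => [|N IH] p q spq Jp Jq p1 q1; first by apply: const_not1 Jp p1; lia.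
case: (leqP (size p) 1) => sp1; first exact: const_not1 Jp p1.
case: (leqP (size q) 1) => sq1; first exact: const_not1 Jq q1.
case: (leqP (size q) (size p)) => sqp.
  have [p' [Jp' p'1 sp']] := poly_one_degree_drop x0 Jp Jq p1 q1 (introT andP (conj sq1 sqp)).
  by apply: (IH p' q) => //; lia.
have p1' : p.[x^-1^-1] = 1 by rewrite invrK.
have [q' [Jq' q'1 sq']] :=
  poly_one_degree_drop x0' Jq Jp q1 p1' (introT andP (conj sp1 (ltnW sqp))).
by apply: (IH p q') => //; lia.
Qed.

End DegreeDrop.
End Chevalley.

Lemma subring_chain_union (K : fieldType) (C : (K -> Prop) -> Prop) (X1 : K -> Prop) :
  C X1 -> (forall X, C X -> subring X) ->
  (forall X Y, C X -> C Y -> ksubset X Y \/ ksubset Y X) ->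
  subring (fun t => exists X, C X /\ X t).
Proof.
move=> CX1 Csub Ctot; have common2 := chain_common_member2 CX1 Ctot.
split=> [| |x y Cx Cy|x y Cx Cy].
- by exists X1; split => //; exact: subring0 (Csub X1 CX1).
- by exists X1; split => //; exact: subring1 (Csub X1 CX1).
- have [X [CX Xx Xy]] := common2 _ _ Cx Cy.
  by exists X; split => //; apply: subringB (Csub X CX) Xx Xy.
- have [X [CX Xx Xy]] := common2 _ _ Cx Cy.
  by exists X; split => //; apply: subringM (Csub X CX) Xx Xy.
Qed.

(* Chevalley: a ring [M] maximal among the overrings [R] with [1 \notin F R] is a valuation
   ring, since if [x, x^-1 \notin M] then [1 \in F M[x]] and [1 \in F M[x^-1]]. *)
Lemma exists_valuation_overring_avoiding (K : fieldType) (D F : K -> Prop) :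
  subring D -> kideal D F -> ~ F 1 ->
  exists V, valuation_overring D V /\ ~ prodm F V 1.
Proof.
move=> hD hF F1; have F0 := submod0 hF.1.
pose P R := [/\ subring R, ksubset D R & ~ prodm F R 1].
have [M [[hM DM FM1] Mmax]] : exists M, P M /\ forall B, P B -> ksubset M B -> B = M.
  apply: (zorn_chain_union (X0 := D)).
    by split=> // FD1; apply: F1; exact: prodm_sub hF.1 (fun x Fx => Fx) _ FD1.
  move=> C PC Ctot [X1 CX1]; split.
  - by apply: subring_chain_union CX1 _ Ctot => X /PC[].
  - by move=> x Dx; exists X1; split => //; case: (PC X1 CX1) => _ + _; apply.
  move=> [n [a [b [Fa Cb e]]]].
  have [X [CX Xb]] := chain_common_member CX1 Ctot n Cb.
  have [hX _ FX1] := PC X CX; apply: FX1.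
  exists n, a, (fun i => if (i < n)%N then b i else 0); split => //.
    by move=> i; case: ifP => [/Xb|_] //; apply: subring0.
  by rewrite e; apply: eq_bigr => i _; rewrite ltn_ord.
exists M; split=> //; split=> [|x x0]; first by split.
case: (classic (M x)) => [|Mx]; first by left.
case: (classic (M x^-1)) => [|Mxi]; first by right.
have F_adjoin y : ~ M y -> prodm F (adjoin M y) 1.
  move=> My; apply: NNPP => Fy1; apply: My.
  have <- : adjoin M y = M.
    apply: Mmax; last exact: adjoin_sub.
    by split=> // [|z /DM]; [apply: adjoin_subring | apply: adjoin_sub].
  exact: adjoin_mem.
have [p [FMp p1]] := prodm_adjoin_poly hM F0 (F_adjoin x Mx).
have [q [FMq q1]] := prodm_adjoin_poly hM F0 (F_adjoin _ Mxi).
have hFM : kideal M (prodm F M).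
  split; first exact: prodm_submod.
  by apply: prodm_sub (subring_submod hM) _ => z /hF.2 /DM.
by case: (no_poly_one_inverse hM hFM FM1 x0 FMp FMq p1 q1).
Qed.

Lemma fg_star_strict_of_valuation_linked (K : fieldType) (D : K -> Prop) st :
  subring D -> semistar D st ->
  (forall V, valuation_overring D V ->
     exists sV, [/\ semistar V sV, sV V = V & linked D st V sV]) ->
  fg_star_strict D st.
Proof.
move=> hD hst linkedV I hI In Ip Ifg.
split; first exact: semistar_le_full (kideal_Fbar hI In) hI.2.
move=> eI; have I1 := (kproper_not1 hD hI).1 Ip.
have [V [hVval IV1]] := exists_valuation_overring_avoiding hD hI I1.
have [sV [hsV sVV lV]] := linkedV V hVval; have [[hV DV] Vval] := hVval.
have sIV := lV I hI In Ifg eI; case: Ifg => s eIs; subst I.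
have [x [x0 Ix IV_xV]] := valuation_prodm_principal hV Vval hD DV In.
have IV_Fbar : Fbar V (prodm (fspan D s) V).
  split; first exact: prodm_submod (submod0 hI.1) hV.
  by exists x; split => //; rewrite -[x]mulr1; apply: prodm_mul (subring1 hV).
have xV_Fbar : Fbar V (kscale x V).
  split; first exact: kscale_submod.
  by exists x; split => //; exists 1; rewrite mulr1; split; first exact: subring1.
have sxV : sV (kscale x V) = kscale x V by rewrite (ss_scale hsV x0 (subring_Fbar hV)) sVV.
have sIV1 : sV (prodm (fspan D s) V) 1 by rewrite sIV sVV; apply: subring1.
have [w [Vw e1]] : kscale x V 1 by rewrite -sxV; apply: (ss_mono hsV) IV_Fbar xV_Fbar IV_xV _ sIV1.
by apply: IV1; rewrite e1; apply: prodm_mul.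
Qed.

Theorem theorem3p9 (K : fieldType) (D : K -> Prop) (hD : domain_with_qf D)
  (st : (K -> Prop) -> (K -> Prop)) (hst : semistar D st) :
  [<->
   (* (i) *)
   (forall T, overring D T -> forall st', semistar T st' -> linked D st T st');
   (* (ii) *)
   (forall T, overring D T -> linked D st T (@d_op K));
   (* (iii) *)
   (forall T, overring D T -> linked D st T (t_op T));
   (* (iv) *)
   (forall V, valuation_overring D V ->
      exists sV, [/\ semistar V sV, sV V = V & linked D st V sV]);
   (* (v) *)
   (forall M, maximal_ideal D M -> nonzero M -> quasi_maximal D (star_f D st) M);
   (* (vi) *)
   (forall I, kideal D I -> nonzero I -> kproper D I ->
      kstrict_subset (star_f D st I) (st D));
   (* (vii) *)
   (forall I, kideal D I -> nonzero I -> kproper D I -> fin_gen D I ->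
      kstrict_subset (st I) (st D));
   (* (viii) *)
   (forall I, kideal D I -> nonzero I -> kproper D I ->
      star_f D st (prodm I (colon D I)) = st D ->
      kstrict_subset (star_f D st I) (st D))].
Proof.
have hDs := hD.1.
split; first by move=> h T hT; apply: h hT _ (d_semistar T).
split; first by move=> h T hT; apply: linked_of_linked_d; apply: h.
split.
  move=> h V hV; exists (@d_op K); split; [exact: d_semistar | by [] |].
  exact: (valuation_linked_d_of_t hDs hV (h V hV.1)).
split.
  move=> h M; apply: (quasi_maximal_of_fg_star_strict hDs hst).
  exact: (fg_star_strict_of_valuation_linked hDs hst h).
split; first exact: (star_f_strict_of_quasi_maximal hDs hst).
split; first exact: (fg_star_strict_of_star_f_strict hst).
split; first by move=> h I hI In Ip _; apply: (star_f_strict_of_fg_star_strict hDs hst).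
move=> h T hT st' _; apply: (linked_of_fg_star_strict hDs st' _ hT).
exact: (fg_star_strict_of_invertible_strict hDs hst).
Qed.
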